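(* Suppose Assumption 1 holds and every $d^k$ satisfies the $\eta$-inexactness condition for a fixed $\eta\in[0,1)$ ($f$ need not be convex). For $t\ge0$ let $G_t\coloneqq\arg\min_dQ^{x^t}_I(d)$ (the minimizer with $H=I$). For Algorithm 1, if $\sigma I\preceq H_k\preceq MI$ for all $k$ with $M\ge\sigma>0$, then for all $k\ge0$ $$\min_{0\le t\le k}\|G_t\|^2\le\frac{F(x^0)-F^*}{\gamma(k+1)}\cdot\frac{M^2\left(1+\frac1\sigma+\sqrt{1-\frac2M+\frac1{\sigma^2}}\right)^2}{2(1-\eta)\sigma\min_{0\le t\le k}\alpha_t}$$ $$\le\frac{F(x^0)-F^*}{\gamma(k+1)}\cdot\frac{M^2\left(1+\frac1\sigma+\sqrt{1-\frac2M+\frac1{\sigma^2}}\right)^2}{2\sigma}\max\left\{\frac1{1-\eta},\ \frac{L}{2(1-\sqrt\eta)(1-\gamma)\sigma\beta}\right\}.$$ For Algorithm 2, if the initial matrices satisfy $m_0I\preceq H^0_k\preceq M_0I$ with $M_0\ge m_0>0$ for all $k$, then for Variant 1 $$\min_{0\le t\le k}\|G_t\|^2\le\frac{F(x^0)-F^*}{\gamma(k+1)}\cdot\frac{\tilde M_1(\eta)^2\left(1+\frac1{m_0}+\sqrt{1-\frac2{\tilde M_1(\eta)}+\frac1{m_0^2}}\right)^2}{2(1-\eta)m_0},$$ and for Variant 2 the same bound holds with $\tilde M_1(\eta)$ replaced by $\tilde M_2(\eta)$.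
   Context: Problem setting: $F(x)=f(x)+\psi(x)$ on $\mathbb{R}^n$, $F^*=\inf F$. Assumption 1: $f$ is differentiable with $L$-Lipschitz continuous gradient ($L>0$); $\psi:\mathbb{R}^n\to\mathbb{R}\cup\{+\infty\}$ is convex, proper and closed; $F$ is bounded below; the solution set $\Omega=\{x:F(x)=F^*\}$ is nonempty. For $x\in\mathbb{R}^n$ and symmetric $H$, $Q^x_H(d)\coloneqq\nabla f(x)^Td+\frac12d^THd+\psi(x+d)-\psi(x)$, $Q^*=\inf_dQ^x_H(d)$; $d$ satisfies the $\eta$-inexactness condition if $Q^x_H(d)\le(1-\eta)Q^*$. Algorithm 1: given $\beta,\gamma\in(0,1)$, $x^0$, fixed $\eta\in[0,1)$; for $k=0,1,\dots$: choose symmetric $H_k$ with $Q_k\coloneqq Q^{x^k}_{H_k}$ strongly convex; compute $d^k$ satisfying the $\eta$-inexactness condition for $Q_k$; let $\Delta_k=\nabla f(x^k)^Td^k+\psi(x^k+d^k)-\psi(x^k)$; let $\alpha_k=\beta^i$ for the smallest nonnegative integer $i$ with $F(x^k+\alpha_kd^k)\le F(x^k)+\alpha_k\gamma\Delta_k$; set $x^{k+1}=x^k+\alpha_kd^k$. Algorithm 2: given $\beta\in(0,1)$, $\gamma\in(0,1]$, $x^0$, fixed $\eta\in[0,1)$; for each $k$: choose symmetric $H^0_k$ (in Variant 1, $H^0_k\succ0$); set $\alpha_k\leftarrow1$, $H_k\leftarrow H^0_k$, compute $d^k$ satisfying the $\eta$-inexactness condition for $Q^{x^k}_{H_k}$;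 while $F(x^k)-F(x^k+d^k)\ge-\gamma Q^{x^k}_{H_k}(d^k)\ge0$ fails: Variant 1 sets $\alpha_k\leftarrow\beta\alpha_k$, $H_k\leftarrow H^0_k/\alpha_k$; Variant 2 sets $H_k\leftarrow H^0_k+\alpha_k^{-1}I$, then $\alpha_k\leftarrow\beta\alpha_k$; then $d^k$ is recomputed satisfying the $\eta$-inexactness condition. Finally $x^{k+1}=x^k+d^k$; ''final $H_k$'' is the accepted matrix. Constants: $\tilde M_2(\eta)\coloneqq M_0+\max\{1,\frac1\beta(\frac{L(1+\sqrt\eta)}{2-\gamma(1-\sqrt\eta)}-m_0)\}$, $\tilde M_1(\eta)\coloneqq M_0\max\{1,\frac{L(1+\sqrt\eta)}{\beta(2-\gamma(1-\sqrt\eta))m_0}\}$. *)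

From Stdlib Require Import Reals Lra Lia.
From Stdlib Require Fin.
Open Scope R_scope.

Definition V (n : nat) := Fin.t n -> R.
Definition Mat (n : nat) := Fin.t n -> Fin.t n -> R.

Fixpoint fsum (n : nat) : (Fin.t n -> R) -> R :=
  match n with
  | O => fun _ => 0
  | S m => fun g => g (@Fin.F1 m) + fsum m (fun i => g (Fin.FS i))
  end.

Definition vadd {n} (x y : V n) : V n := fun i => x i + y i.
Definition vsub {n} (x y : V n) : V n := fun i => x i - y i.
Definition vscale {n} (a : R) (x : V n) : V n := fun i => a * x i.
Definition dot {n} (x y : V n) : R := fsum n (fun i => x i * y i).
Definition vnorm {n} (x : V n) : R := sqrt (dot x x).

Definition mv {n} (A : Mat n) (x : V n) : V n := fun i => fsum n (fun j => A i j * x j).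
Definition quad {n} (A : Mat n) (d : V n) : R := dot d (mv A d).
Definition Iden (n : nat) : Mat n := fun i j => if Fin.eq_dec i j then 1 else 0.
Definition madd {n} (A B : Mat n) : Mat n := fun i j => A i j + B i j.
Definition mscale {n} (a : R) (A : Mat n) : Mat n := fun i j => a * A i j.
Definition symmetric {n} (A : Mat n) : Prop := forall i j, A i j = A j i.
Definition loewner_between {n} (lo hi : R) (A : Mat n) : Prop :=
  forall d : V n, lo * dot d d <= quad A d /\ quad A d <= hi * dot d d.

Definition has_gradient {n} (f : V n -> R) (gf : V n -> V n) : Prop :=
  forall x eps, 0 < eps -> exists delta, 0 < delta /\
    forall h : V n, vnorm h < delta ->
      Rabs (f (vadd x h) - f x - dot (gf x) h) <= eps * vnorm h.

Definition lipschitz_grad {n} (gf : V n -> V n) (L : R) : Prop :=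
  forall x y : V n, vnorm (vsub (gf x) (gf y)) <= L * vnorm (vsub x y).

(* psi : R^n -> R U {+oo} is represented by its effective domain dom and its
   finite values psi on dom (psi = +oo outside dom). *)
Definition ext_proper {n} (dom : V n -> Prop) : Prop := exists x, dom x.

Definition ext_convex {n} (dom : V n -> Prop) (psi : V n -> R) : Prop :=
  forall x y t, dom x -> dom y -> 0 <= t <= 1 ->
    dom (vadd (vscale t x) (vscale (1 - t) y)) /\
    psi (vadd (vscale t x) (vscale (1 - t) y)) <= t * psi x + (1 - t) * psi y.

(* closed = closed epigraph {(x,c) | x in dom, psi x <= c} *)
Definition ext_closed {n} (dom : V n -> Prop) (psi : V n -> R) : Prop :=
  forall (u : nat -> V n) (c : nat -> R) (u0 : V n) (c0 : R),
    (forall k, dom (u k) /\ psi (u k) <= c k) ->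
    Un_cv (fun k => vnorm (vsub (u k) u0)) 0 ->
    Un_cv c c0 ->
    dom u0 /\ psi u0 <= c0.

Definition Fval {n} (f psi : V n -> R) (x : V n) : R := f x + psi x.

Definition assumption1 {n} (f : V n -> R) (gf : V n -> V n) (L : R)
  (dom : V n -> Prop) (psi : V n -> R) (Fstar : R) : Prop :=
  has_gradient f gf /\ 0 < L /\ lipschitz_grad gf L /\
  ext_proper dom /\ ext_convex dom psi /\ ext_closed dom psi /\
  (forall x, dom x -> Fstar <= Fval f psi x) /\
  (exists x, dom x /\ Fval f psi x = Fstar).

(* Q^x_H(d), valid when x, x+d in dom *)
Definition Qval {n} (gf : V n -> V n) (psi : V n -> R) (x : V n) (H : Mat n) (d : V n) : R :=
  dot (gf x) d + / 2 * quad H d + psi (vadd x d) - psi x.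

Definition is_Qinf {n} (dom : V n -> Prop) (gf : V n -> V n) (psi : V n -> R)
  (x : V n) (H : Mat n) (q : R) : Prop :=
  (forall d, dom (vadd x d) -> q <= Qval gf psi x H d) /\
  (forall q', (forall d, dom (vadd x d) -> q' <= Qval gf psi x H d) -> q' <= q).

Definition inexact {n} (dom : V n -> Prop) (gf : V n -> V n) (psi : V n -> R)
  (x : V n) (H : Mat n) (eta : R) (d : V n) : Prop :=
  dom (vadd x d) /\
  exists q, is_Qinf dom gf psi x H q /\ Qval gf psi x H d <= (1 - eta) * q.

Definition is_argmin_QI {n} (dom : V n -> Prop) (gf : V n -> V n) (psi : V n -> R)
  (x G : V n) : Prop :=
  dom (vadd x G) /\
  forall d, dom (vadd x d) -> Qval gf psi x (Iden n) G <= Qval gf psi x (Iden n) d.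

Fixpoint min_upto (k : nat) (g : nat -> R) : R :=
  match k with
  | O => g O
  | S k' => Rmin (min_upto k' g) (g (S k'))
  end.

Definition Delta {n} (gf : V n -> V n) (psi : V n -> R) (x d : V n) : R :=
  dot (gf x) d + psi (vadd x d) - psi x.

Definition armijo_ok {n} (f : V n -> R) (gf : V n -> V n) (dom : V n -> Prop)
  (psi : V n -> R) (gamma : R) (x d : V n) (a : R) : Prop :=
  dom (vadd x (vscale a d)) /\
  Fval f psi (vadd x (vscale a d)) <= Fval f psi x + a * gamma * Delta gf psi x d.

Definition alg1_run {n} (f : V n -> R) (gf : V n -> V n) (dom : V n -> Prop)
  (psi : V n -> R) (eta beta gamma sigma M : R)
  (x : nat -> V n) (H : nat -> Mat n) (d : nat -> V n) (alpha : nat -> R) : Prop :=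
  dom (x O) /\
  forall k,
    symmetric (H k) /\ loewner_between sigma M (H k) /\
    inexact dom gf psi (x k) (H k) eta (d k) /\
    (exists i : nat, alpha k = beta ^ i /\
       armijo_ok f gf dom psi gamma (x k) (d k) (beta ^ i) /\
       forall j : nat, (j < i)%nat -> ~ armijo_ok f gf dom psi gamma (x k) (d k) (beta ^ j)) /\
    x (S k) = vadd (x k) (vscale (alpha k) (d k)).

Definition accept2 {n} (f : V n -> R) (gf : V n -> V n) (psi : V n -> R)
  (gamma : R) (x : V n) (H : Mat n) (d : V n) : Prop :=
  Fval f psi x - Fval f psi (vadd x d) >= - gamma * Qval gf psi x H d /\
  - gamma * Qval gf psi x H d >= 0.

(* trial matrix after i rejections *)
Definition Htrial1 {n} (beta : R) (H0 : Mat n) (i : nat) : Mat n :=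
  mscale (/ beta ^ i) H0.
Definition Htrial2 {n} (beta : R) (H0 : Mat n) (i : nat) : Mat n :=
  match i with
  | O => H0
  | S i' => madd H0 (mscale (/ beta ^ i') (Iden n))
  end.

(* jk k = number of rejections at outer iteration k; D k i = i-th trial direction *)
Definition alg2_run {n} (Htr : R -> Mat n -> nat -> Mat n)
  (f : V n -> R) (gf : V n -> V n) (dom : V n -> Prop)
  (psi : V n -> R) (eta beta gamma m0 M0 : R)
  (x : nat -> V n) (H0 : nat -> Mat n) (jk : nat -> nat) (D : nat -> nat -> V n) : Prop :=
  dom (x O) /\
  forall k,
    symmetric (H0 k) /\ loewner_between m0 M0 (H0 k) /\
    (forall i, (i <= jk k)%nat -> inexact dom gf psi (x k) (Htr beta (H0 k) i) eta (D k i)) /\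
    (forall i, (i < jk k)%nat -> ~ accept2 f gf psi gamma (x k) (Htr beta (H0 k) i) (D k i)) /\
    accept2 f gf psi gamma (x k) (Htr beta (H0 k) (jk k)) (D k (jk k)) /\
    x (S k) = vadd (x k) (D k (jk k)).

Definition Mtilde2 (L beta gamma m0 M0 eta : R) : R :=
  M0 + Rmax 1 (/ beta * (L * (1 + sqrt eta) / (2 - gamma * (1 - sqrt eta)) - m0)).
Definition Mtilde1 (L beta gamma m0 M0 eta : R) : R :=
  M0 * Rmax 1 (L * (1 + sqrt eta) / (beta * (2 - gamma * (1 - sqrt eta)) * m0)).

Definition cst (M s : R) : R :=
  M ^ 2 * (1 + / s + sqrt (1 - 2 / M + / s ^ 2)) ^ 2.

From Pilot Require Import Defs.
From Stdlib Require Import Reals Lra Lia Psatz FunctionalExtensionality.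
From Stdlib Require Fin.
Open Scope R_scope.

(* The descent lemma and convexity of [psi] along segments give
   [F(x + a d) <= F(x) + a Delta + L/2 a^2 |d|^2], while eta-inexactness, compared
   with the model value at [d / (1 + sqrt eta)], gives [(1 + sqrt eta) (-Delta) >= d^T H d].
   Together they bound the Armijo steps of Algorithm 1 from below, and force Algorithm 2
   to accept as soon as the curvature exceeds [L (1 + sqrt eta) / (2 - gamma (1 - sqrt eta))],
   which bounds its accepted matrices by [Mtilde].  Hence every iteration decreases [F] by a
   fixed multiple of [-Q*]; since the prox-gradient step satisfies [|G|^2 <= 2 max(1, M) |Q*|]
   whenever [H <= M I], the decreases telescope to the rate. *)

Lemma fsum_ext n (g h : Fin.t n -> R) : (forall i, g i = h i) -> fsum n g = fsum n h.
Proof.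
  induction n as [|n IH]; intros E; simpl; [reflexivity|].
  rewrite E, (IH _ _ (fun i => E _)). reflexivity.
Qed.

Lemma fsum_add n (g h : Fin.t n -> R) : fsum n (fun i => g i + h i) = fsum n g + fsum n h.
Proof. induction n as [|n IH]; simpl; [lra|]. rewrite IH. lra. Qed.

Lemma fsum_scal n c (g : Fin.t n -> R) : fsum n (fun i => c * g i) = c * fsum n g.
Proof. induction n as [|n IH]; simpl; [lra|]. rewrite IH. lra. Qed.

Lemma fsum_nonneg n (g : Fin.t n -> R) : (forall i, 0 <= g i) -> 0 <= fsum n g.
Proof.
  induction n as [|n IH]; intros E; simpl; [lra|].
  specialize (IH (fun i => g (Fin.FS i)) (fun i => E _)). specialize (E Fin.F1). lra.
Qed.

Lemma fsum_delta n (i : Fin.t n) (g : Fin.t n -> R) :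
  fsum n (fun j => (if Fin.eq_dec i j then 1 else 0) * g j) = g i.
Proof.
  revert g; induction i as [n|n i IH]; intros g; simpl.
  - destruct (Fin.eq_dec Fin.F1 Fin.F1) as [_|C]; [|congruence].
    rewrite fsum_scal. lra.
  - rewrite <- (IH (fun j => g (Fin.FS j))), Rmult_0_l, Rplus_0_l.
    apply fsum_ext. intros j.
    destruct (Fin.eq_dec (Fin.FS i) (Fin.FS j)) as [C|C], (Fin.eq_dec i j) as [C'|C'];
      try reflexivity.
    + apply Fin.FS_inj in C. congruence.
    + subst. congruence.
Qed.

Section Euclidean.
Context {n : nat}.
Implicit Types u v w : V n.

Lemma dot_comm u v : dot u v = dot v u.
Proof. unfold dot. apply fsum_ext; intros; ring. Qed.

Lemma dot_scal_r a u v : dot u (vscale a v) = a * dot u v.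
Proof. unfold dot, vscale. rewrite <- fsum_scal. apply fsum_ext; intros; ring. Qed.

Lemma dot_scal_l a u v : dot (vscale a u) v = a * dot u v.
Proof. rewrite dot_comm, dot_scal_r, dot_comm. reflexivity. Qed.

Lemma dot_sub_l u v w : dot (vsub v w) u = dot v u - dot w u.
Proof.
  unfold dot, vsub.
  rewrite (fsum_ext _ _ (fun i => v i * u i + (-1) * (w i * u i))) by (intros; ring).
  rewrite fsum_add, fsum_scal. ring.
Qed.

Lemma dot_nonneg u : 0 <= dot u u.
Proof. apply fsum_nonneg. intros; nra. Qed.

Lemma dot_sub_scal_self u v l :
  dot (vsub u (vscale l v)) (vsub u (vscale l v)) = dot u u - 2 * l * dot u v + l * l * dot v v.
Proof.
  unfold dot, vsub, vscale.
  rewrite (fsum_ext _ _ (fun i => u i * u i + (-2 * l) * (u i * v i) + (l * l) * (v i * v i)))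
    by (intros; ring).
  rewrite !fsum_add, !fsum_scal. ring.
Qed.

Lemma vnorm_sqr u : vnorm u * vnorm u = dot u u.
Proof. apply sqrt_sqrt, dot_nonneg. Qed.

Lemma vnorm_pow2 u : vnorm u ^ 2 = dot u u.
Proof. apply pow2_sqrt, dot_nonneg. Qed.

Lemma cauchy_schwarz u v : dot u v <= vnorm u * vnorm v.
Proof.
  set (a := dot u u); set (b := dot v v); set (c := dot u v).
  assert (Hquad : forall l, 0 <= a - 2 * l * c + l * l * b).
  { intros l. unfold a, b, c. rewrite <- dot_sub_scal_self. apply dot_nonneg. }
  assert (Hc2 : c * c <= a * b).
  { destruct (Rle_lt_or_eq_dec 0 b (dot_nonneg v)) as [Hb|Hb].
    - specialize (Hquad (c / b)).
      replace (a - 2 * (c / b) * c + c / b * (c / b) * b) with ((a * b - c * c) / b) in Hquad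
        by (field; lra).
      apply Rmult_le_compat_r with (r := b) in Hquad; [|lra].
      unfold Rdiv in Hquad. rewrite Rmult_assoc, Rinv_l in Hquad; lra.
    - destruct (Req_dec c 0) as [Hc|Hc]; [rewrite Hc, <- Hb; lra|].
      specialize (Hquad ((a + 1) / (2 * c))). rewrite <- Hb in Hquad.
      replace (2 * ((a + 1) / (2 * c)) * c) with (a + 1) in Hquad by (field; lra). lra. }
  apply Rle_trans with (Rabs c); [apply Rle_abs|].
  unfold vnorm. rewrite <- sqrt_mult_alt, <- sqrt_Rsqr_abs by apply dot_nonneg.
  apply sqrt_le_1_alt. exact Hc2.
Qed.

Lemma vnorm_scale a u : vnorm (vscale a u) = Rabs a * vnorm u.
Proof.
  unfold vnorm. rewrite dot_scal_l, dot_scal_r, <- Rmult_assoc, sqrt_mult_alt by nra.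
  rewrite <- sqrt_Rsqr_abs. reflexivity.
Qed.

Lemma quad_scal (H : Mat n) a u : quad H (vscale a u) = a * a * quad H u.
Proof.
  assert (Hmv : mv H (vscale a u) = vscale a (mv H u)).
  { apply functional_extensionality; intro i. unfold mv, vscale.
    rewrite <- fsum_scal. apply fsum_ext; intros; ring. }
  unfold quad. rewrite Hmv, dot_scal_l, dot_scal_r. ring.
Qed.

Lemma quad_mscale (H : Mat n) a u : quad (mscale a H) u = a * quad H u.
Proof.
  unfold quad. rewrite <- dot_scal_r. f_equal. apply functional_extensionality; intro i.
  unfold mv, mscale, vscale. rewrite <- fsum_scal. apply fsum_ext; intros; ring.
Qed.

Lemma quad_madd (A B : Mat n) u : quad (madd A B) u = quad A u + quad B u.
Proof.
  unfold quad, dot. rewrite <- fsum_add. apply fsum_ext; intro i.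
  unfold mv, madd. rewrite <- Rmult_plus_distr_l, <- fsum_add.
  f_equal. apply fsum_ext; intros; ring.
Qed.

Lemma quad_Iden u : quad (Iden n) u = dot u u.
Proof.
  unfold quad. f_equal. apply functional_extensionality; intro i. apply fsum_delta.
Qed.

End Euclidean.

Section Descent.
Context {n : nat} {f : V n -> R} {gf : V n -> V n}.
Hypothesis Hgrad : has_gradient f gf.

Lemma vadd_vscale_add (x h : V n) t s :
  vadd (vadd x (vscale t h)) (vscale s h) = vadd x (vscale (t + s) h).
Proof. apply functional_extensionality; intro i. unfold vadd, vscale. ring. Qed.

Lemma derivable_pt_lim_line (x h : V n) t :
  derivable_pt_lim (fun s => f (vadd x (vscale s h))) t (dot (gf (vadd x (vscale t h))) h).
Proof.
  intros eps Heps.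
  set (p := vadd x (vscale t h)). set (nh := vnorm h).
  assert (Hnh : 0 <= nh) by apply sqrt_pos.
  destruct (Hgrad p (eps / (nh + 1))) as [del [Hdel Hbound]].
  { apply Rdiv_lt_0_compat; lra. }
  assert (Hdel' : 0 < del / (nh + 1)) by (apply Rdiv_lt_0_compat; lra).
  exists (mkposreal _ Hdel'); simpl. intros s Hs0 Hs.
  assert (Hsnh : Rabs s * nh < del).
  { apply Rle_lt_trans with (Rabs s * (nh + 1)); [pose proof (Rabs_pos s); nra|].
    apply Rmult_lt_compat_r with (r := nh + 1) in Hs; [|lra].
    unfold Rdiv in Hs. rewrite Rmult_assoc, Rinv_l, Rmult_1_r in Hs; lra. }
  specialize (Hbound (vscale s h)).
  unfold p in Hbound. rewrite vnorm_scale, vadd_vscale_add, dot_scal_r in Hbound.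
  fold p nh in Hbound.
  specialize (Hbound Hsnh).
  assert (Has : 0 < Rabs s) by (apply Rabs_pos_lt; exact Hs0).
  replace ((f (vadd x (vscale (t + s) h)) - f p) / s - dot (gf p) h)
    with ((f (vadd x (vscale (t + s) h)) - f p - s * dot (gf p) h) / s) by (field; exact Hs0).
  unfold Rdiv at 1. rewrite Rabs_mult, Rabs_inv.
  apply Rle_lt_trans with (eps / (nh + 1) * nh).
  - apply Rmult_le_reg_r with (r := Rabs s); [exact Has|].
    rewrite Rmult_assoc, Rinv_l, Rmult_1_r by lra. lra.
  - replace (eps / (nh + 1) * nh) with (eps - eps / (nh + 1)) by (field; lra).
    assert (0 < eps / (nh + 1)) by (apply Rdiv_lt_0_compat; lra). lra.
Qed.

Lemma descent_lemma {L : R} (x h : V n) :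
  lipschitz_grad gf L -> 0 <= L ->
  f (vadd x h) <= f x + dot (gf x) h + L / 2 * dot h h.
Proof.
  intros HL HL0.
  set (p := fun t => vadd x (vscale t h)).
  set (a := dot (gf x) h). set (D := dot h h).
  (* [phi] is nonincreasing on [0, 1] by the Lipschitz bound on [gf]. *)
  set (phi := fun t => f (p t) - a * t - L / 2 * D * t ^ 2).
  assert (Hphi : forall t, derivable_pt_lim phi t (dot (gf (p t)) h - a - L * D * t)).
  { intros t.
    replace (dot (gf (p t)) h - a - L * D * t)
      with (dot (gf (p t)) h - a * 1 - L / 2 * D * (INR 2 * t ^ Nat.pred 2)) by (simpl; field).
    apply derivable_pt_lim_minus; [apply derivable_pt_lim_minus|].
    - apply derivable_pt_lim_line.
    - apply derivable_pt_lim_scal, derivable_pt_lim_id.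
    - apply derivable_pt_lim_scal, derivable_pt_lim_pow. }
  destruct (MVT_cor2 phi _ 0 1 Rlt_0_1 (fun c _ => Hphi c)) as [c [Hmvt Hc]].
  assert (Hslope : dot (gf (p c)) h - a <= L * D * c).
  { unfold a. rewrite <- dot_sub_l.
    eapply Rle_trans; [apply cauchy_schwarz|].
    assert (Hpc : vsub (p c) x = vscale c h).
    { apply functional_extensionality; intro i. unfold p, vsub, vadd, vscale. ring. }
    pose proof (HL (p c) x) as HLc. rewrite Hpc, vnorm_scale, Rabs_right in HLc by lra.
    assert (0 <= vnorm h) by apply sqrt_pos.
    assert (0 <= vnorm (vsub (gf (p c)) (gf x))) by apply sqrt_pos.
    unfold D. rewrite <- vnorm_sqr. nra. }
  assert (Hp0 : p 0 = x).
  { apply functional_extensionality; intro i. unfold p, vadd, vscale. ring. }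
  assert (Hp1 : p 1 = vadd x h).
  { apply functional_extensionality; intro i. unfold p, vadd, vscale. ring. }
  unfold phi in Hmvt. rewrite Hp0, Hp1 in Hmvt.
  assert (0 <= D) by apply dot_nonneg. nra.
Qed.

End Descent.

Lemma le_of_forall_lt_1 a b : (forall t, 0 <= t < 1 -> t * a <= b) -> a <= b.
Proof.
  intros Hab. destruct (Rle_or_lt a b) as [Hle|Hlt]; [exact Hle|exfalso].
  assert (Hb : 0 <= b) by (specialize (Hab 0); lra).
  specialize (Hab ((a + b) / (2 * a))).
  replace ((a + b) / (2 * a) * a) with ((a + b) / 2) in Hab by (field; lra).
  assert (0 <= (a + b) / (2 * a)) by (apply Rmult_le_pos; [lra|left; apply Rinv_0_lt_compat; lra]).
  assert ((a + b) / (2 * a) < 1).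
  { apply Rmult_lt_reg_r with (2 * a); [lra|].
    unfold Rdiv. rewrite Rmult_assoc, Rinv_l; lra. }
  specialize (Hab ltac:(lra)). lra.
Qed.

Lemma sqrt_bounds_lt_1 eta : 0 <= eta < 1 ->
  0 <= sqrt eta /\ sqrt eta < 1 /\ sqrt eta * sqrt eta = eta.
Proof.
  intros He. pose proof (sqrt_pos eta). pose proof (sqrt_sqrt eta (proj1 He)). nra.
Qed.

Section Subproblem.
Context {n : nat} {dom : V n -> Prop} {gf : V n -> V n} {psi : V n -> R}.
Hypothesis Hconv : ext_convex dom psi.

Lemma Qval_Delta x H d : Qval gf psi x H d = Defs.Delta gf psi x d + / 2 * quad H d.
Proof. unfold Qval, Defs.Delta. ring. Qed.

Lemma dom_segment x d t : dom x -> dom (vadd x d) -> 0 <= t <= 1 ->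
  dom (vadd x (vscale t d)) /\
  psi (vadd x (vscale t d)) <= t * psi (vadd x d) + (1 - t) * psi x.
Proof.
  intros Dx Dd Ht.
  replace (vadd x (vscale t d)) with (vadd (vscale t (vadd x d)) (vscale (1 - t) x))
    by (apply functional_extensionality; intro i; unfold vadd, vscale; ring).
  exact (Hconv _ _ _ Dd Dx Ht).
Qed.

Lemma Delta_segment x d t : dom x -> dom (vadd x d) -> 0 <= t <= 1 ->
  Defs.Delta gf psi x (vscale t d) <= t * Defs.Delta gf psi x d.
Proof.
  intros Dx Dd Ht. pose proof (proj2 (dom_segment x d t Dx Dd Ht)).
  unfold Defs.Delta. rewrite dot_scal_r. lra.
Qed.

Lemma Qval_segment x H d t : dom x -> dom (vadd x d) -> 0 <= t <= 1 ->
  Qval gf psi x H (vscale t d) <= t * Qval gf psi x H d - t * (1 - t) / 2 * quad H d.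
Proof.
  intros Dx Dd Ht. pose proof (Delta_segment x d t Dx Dd Ht).
  rewrite !Qval_Delta, quad_scal. lra.
Qed.

Lemma Qinf_nonpos x H q : dom x -> is_Qinf dom gf psi x H q -> q <= 0.
Proof.
  intros Dx [Hq _].
  assert (Hzero : vadd x (vscale 0 x) = x)
    by (apply functional_extensionality; intro i; unfold vadd, vscale; ring).
  specialize (Hq (vscale 0 x)). rewrite Hzero in Hq. specialize (Hq Dx).
  unfold Qval in Hq. rewrite dot_scal_r, quad_scal, Hzero in Hq. lra.
Qed.

Section Inexact.
Context {x : V n} {H : Mat n} {eta q : R} {d : V n}.
Hypotheses (Dx : dom x) (Dd : dom (vadd x d)) (Heta : 0 <= eta < 1)
  (Hq : is_Qinf dom gf psi x H q) (Hd : Qval gf psi x H d <= (1 - eta) * q).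

(* Comparing [Q*] with [Q(t d)] for [t = 1 / (1 + sqrt eta)]; when [eta = 0] the
   best [t] is the limit [t -> 1]. *)
Lemma inexact_quad_bound : quad H d <= 2 * (1 + sqrt eta) ^ 2 * (- q).
Proof.
  pose proof (Qinf_nonpos x H q Dx Hq) as Hq0.
  destruct (sqrt_bounds_lt_1 eta Heta) as [Hs0 [Hs1 Hss]]. set (s := sqrt eta) in *.
  set (h := quad H d).
  assert (Hkey : forall t, 0 <= t <= 1 -> t * (1 - t) / 2 * h <= - q * (1 - t * (1 - eta))).
  { intros t Ht. pose proof (proj1 Hq _ (proj1 (dom_segment x d t Dx Dd Ht))).
    pose proof (Qval_segment x H d t Dx Dd Ht).
    pose proof (Rmult_le_compat_l t _ _ (proj1 Ht) Hd). unfold h. lra. }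
  destruct (Rle_lt_or_eq_dec 0 s Hs0) as [Hs|Hs].
  - set (t := / (1 + s)).
    assert (Ht : 0 <= t <= 1).
    { split; [left; apply Rinv_0_lt_compat; lra|].
      rewrite <- Rinv_1. apply Rinv_le_contravar; lra. }
    apply Rmult_le_reg_l with s; [exact Hs|].
    replace (s * h) with (2 * (1 + s) ^ 2 * (t * (1 - t) / 2 * h)) by (unfold t; field; lra).
    replace (s * (2 * (1 + s) ^ 2 * - q)) with (2 * (1 + s) ^ 2 * (- q * (1 - t * (1 - eta))))
      by (unfold t; rewrite <- Hss; field; lra).
    apply Rmult_le_compat_l; [nra|exact (Hkey t Ht)].
  - rewrite <- Hs. rewrite <- Hs in Hss.
    assert (Hh : h / 2 <= - q).
    { apply le_of_forall_lt_1. intros t Ht. specialize (Hkey t ltac:(lra)).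
      rewrite <- Hss in Hkey. nra. }
    lra.
Qed.

Lemma inexact_Delta_bound : quad H d <= (1 + sqrt eta) * (- Defs.Delta gf psi x d).
Proof.
  pose proof inexact_quad_bound as Hb.
  destruct (sqrt_bounds_lt_1 eta Heta) as [Hs0 [Hs1 Hss]].
  rewrite Qval_Delta in Hd. rewrite <- Hss in Hd. nra.
Qed.

End Inexact.

(* [G] minimizes a 1-strongly convex model, so [Q_I(G) <= Q_I(s G)] for [s < 1]. *)
Lemma argmin_QI_Delta x G : dom x -> is_argmin_QI dom gf psi x G ->
  Defs.Delta gf psi x G <= - dot G G.
Proof.
  intros Dx [DG Hmin].
  assert (HQ : dot G G / 2 <= - Qval gf psi x (Iden n) G).
  { apply le_of_forall_lt_1. intros s Hs.
    pose proof (Hmin _ (proj1 (dom_segment x G s Dx DG ltac:(lra)))).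
    pose proof (Qval_segment x (Iden n) G s Dx DG ltac:(lra)).
    rewrite quad_Iden in *. nra. }
  rewrite Qval_Delta, quad_Iden in HQ. lra.
Qed.

Lemma argmin_QI_bound x H G q M : dom x -> is_argmin_QI dom gf psi x G ->
  is_Qinf dom gf psi x H q -> quad H G <= M * dot G G ->
  dot G G <= 2 * Rmax 1 M * (- q).
Proof.
  intros Dx HG Hq HM. pose proof (argmin_QI_Delta x G Dx HG) as HD.
  set (D := dot G G) in *. assert (HD0 : 0 <= D) by apply dot_nonneg.
  assert (Hkey : forall t, 0 <= t <= 1 -> q <= - t * D + t * t * M * D / 2).
  { intros t Ht. destruct HG as [DG _].
    pose proof (proj1 Hq _ (proj1 (dom_segment x G t Dx DG Ht))).
    pose proof (Delta_segment x G t Dx DG Ht).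
    rewrite Qval_Delta, quad_scal in *. nra. }
  destruct (Rle_lt_dec 1 M) as [HM1|HM1].
  - rewrite Rmax_right by lra.
    assert (Ht : 0 <= / M <= 1).
    { split; [left; apply Rinv_0_lt_compat; lra|].
      rewrite <- Rinv_1. apply Rinv_le_contravar; lra. }
    specialize (Hkey (/ M) Ht).
    replace (- / M * D + / M * / M * M * D / 2) with (- (D / (2 * M))) in Hkey by (field; lra).
    replace D with (2 * M * (D / (2 * M))) at 1 by (field; lra).
    apply Rmult_le_compat_l; lra.
  - rewrite Rmax_left by lra. specialize (Hkey 1 ltac:(lra)). nra.
Qed.

End Subproblem.

Lemma Rmax_le_cst M sigma : 0 < sigma <= M -> 2 * Rmax 1 M <= cst M sigma / (2 * sigma).
Proof.
  intros Hs. set (u := / sigma).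
  assert (Hu : 0 < u) by (apply Rinv_0_lt_compat; lra).
  assert (HMu : 1 <= M * u) by (unfold u; apply Rmult_le_reg_r with sigma; [lra|];
    rewrite Rmult_assoc, Rinv_l; lra).
  assert (Hsq : Rabs (1 - u) <= sqrt (1 - 2 / M + / sigma ^ 2)).
  { rewrite <- sqrt_Rsqr_abs. apply sqrt_le_1_alt. unfold Rsqr.
    replace (/ sigma ^ 2) with (u * u) by (unfold u; field; lra).
    replace (2 / M) with (2 * / M) by reflexivity.
    assert (/ M <= u) by (apply Rinv_le_contravar; lra). nra. }
  set (w := 1 + / sigma + sqrt (1 - 2 / M + / sigma ^ 2)).
  assert (Hw : 2 * Rmax 1 u <= w).
  { unfold w. fold u. unfold Rmax. destruct (Rle_dec 1 u);
    pose proof (Rle_abs (1 - u)); pose proof (Rle_abs (- (1 - u))); rewrite Rabs_Ropp in *; lra. }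
  replace (cst M sigma / (2 * sigma)) with (M ^ 2 * w ^ 2 * u / 2) by (unfold cst, w, u; field; lra).
  assert (Hw2 : 4 * Rmax 1 u ^ 2 <= w ^ 2) by (pose proof (Rmax_l 1 u); nra).
  assert (HM0 : 0 < M) by lra.
  unfold Rmax at 1. destruct (Rle_dec 1 M) as [HM1|HM1].
  - assert (Hw4 : 4 <= w ^ 2) by (pose proof (Rmax_l 1 u); nra).
    assert (4 <= M * u * w ^ 2) by nra.
    replace (M ^ 2 * w ^ 2 * u / 2) with (M * (M * u * w ^ 2) / 2) by field. nra.
  - assert (Hu1 : 1 < u) by nra.
    rewrite Rmax_right in Hw2 by lra.
    assert (4 * (M * u) ^ 2 <= M ^ 2 * w ^ 2) by nra.
    assert (1 <= (M * u) ^ 2) by nra. nra.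
Qed.

Section Step.
Context {n : nat} {f : V n -> R} {gf : V n -> V n} {L : R} {dom : V n -> Prop} {psi : V n -> R}.
Hypotheses (Hgrad : has_gradient f gf) (Hlip : lipschitz_grad gf L) (HL : 0 < L)
  (Hconv : ext_convex dom psi).
Context {x : V n} {H : Mat n} {eta q m gamma : R} {d : V n}.
Hypotheses (Dx : dom x) (Dd : dom (vadd x d)) (Heta : 0 <= eta < 1)
  (Hq : is_Qinf dom gf psi x H q) (Hd : Qval gf psi x H d <= (1 - eta) * q)
  (Hm : m * dot d d <= quad H d) (Hgamma : 0 <= gamma <= 1).

Lemma Fval_segment a : 0 <= a <= 1 ->
  dom (vadd x (vscale a d)) /\
  Fval f psi (vadd x (vscale a d))
    <= Fval f psi x + a * Defs.Delta gf psi x d + L / 2 * (a * a * dot d d).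
Proof.
  intros Ha. destruct (dom_segment Hconv x d a Dx Dd Ha) as [Da Hpsi].
  split; [exact Da|].
  pose proof (descent_lemma Hgrad x (vscale a d) Hlip ltac:(lra)) as Hf.
  rewrite dot_scal_r, dot_scal_l, dot_scal_r, <- Rmult_assoc in Hf.
  unfold Fval, Defs.Delta. lra.
Qed.

Lemma armijo_ok_of_small_step a : 0 < a <= 1 ->
  a <= 2 * (1 - gamma) * m / (L * (1 + sqrt eta)) ->
  armijo_ok f gf dom psi gamma x d a.
Proof.
  intros Ha Hsmall.
  destruct (Fval_segment a ltac:(lra)) as [Da HF]. split; [exact Da|].
  pose proof (inexact_Delta_bound Hconv Dx Dd Heta Hq Hd) as HDelta.
  destruct (sqrt_bounds_lt_1 eta Heta) as [Hs0 _]. set (s := sqrt eta) in *.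
  set (D := dot d d) in *. assert (HD : 0 <= D) by apply dot_nonneg.
  set (Dl := Defs.Delta gf psi x d) in *.
  assert (HaL : a * (L * (1 + s)) <= 2 * (1 - gamma) * m).
  { apply Rmult_le_compat_r with (r := L * (1 + s)) in Hsmall; [|nra].
    unfold Rdiv in Hsmall. rewrite Rmult_assoc, Rinv_l, Rmult_1_r in Hsmall; nra. }
  assert (Hdec : (1 + s) * (a * L * D / 2) <= (1 + s) * ((1 - gamma) * - Dl)) by nra.
  apply Rmult_le_reg_l in Hdec; [|lra].
  nra.
Qed.

Lemma accept2_of_large_curvature :
  L * (1 + sqrt eta) / (2 - gamma * (1 - sqrt eta)) <= m ->
  accept2 f gf psi gamma x H d.
Proof.
  intros Hlarge.
  destruct (Fval_segment 1 ltac:(lra)) as [_ HF].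
  replace (vadd x (vscale 1 d)) with (vadd x d) in HF
    by (apply functional_extensionality; intro i; unfold vadd, vscale; ring).
  pose proof (inexact_Delta_bound Hconv Dx Dd Heta Hq Hd) as HDelta.
  pose proof (Qinf_nonpos x H q Dx Hq) as Hq0.
  destruct (sqrt_bounds_lt_1 eta Heta) as [Hs0 [Hs1 _]]. set (s := sqrt eta) in *.
  set (D := dot d d) in *. assert (HD : 0 <= D) by apply dot_nonneg.
  assert (Hden : 0 < 2 - gamma * (1 - s)) by nra.
  assert (HmL : L * (1 + s) <= m * (2 - gamma * (1 - s))).
  { apply Rmult_le_compat_r with (r := 2 - gamma * (1 - s)) in Hlarge; [|lra].
    unfold Rdiv in Hlarge. rewrite Rmult_assoc, Rinv_l, Rmult_1_r in Hlarge; lra. }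
  rewrite Qval_Delta in *. set (Dl := Defs.Delta gf psi x d) in *.
  set (h := quad H d) in *.
  assert (Hdec : (1 + s) * (L * D / 2) <= (1 + s) * ((1 - gamma) * - Dl + gamma * h / 2)).
  { pose proof (Rmult_le_compat_l (1 - gamma) _ _ ltac:(lra) HDelta).
    pose proof (Rmult_le_compat_r ((2 - gamma * (1 - s)) / 2) _ _ ltac:(lra) Hm).
    pose proof (Rmult_le_compat_r (D / 2) _ _ ltac:(lra) HmL).
    nra. }
  apply Rmult_le_reg_l in Hdec; [|lra].
  assert (HQ : Dl + / 2 * h <= 0) by (pose proof (Rmult_le_compat_l (1 - eta) _ _ ltac:(lra) Hq0); lra).
  unfold accept2. rewrite Qval_Delta. fold Dl h.
  split; [lra|]. pose proof (Rmult_le_compat_l gamma _ _ (proj1 Hgamma) HQ). lra.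
Qed.

End Step.

Lemma min_upto_le k g t : (t <= k)%nat -> min_upto k g <= g t.
Proof.
  induction k as [|k IH]; intros Ht; simpl.
  - replace t with O by lia. lra.
  - destruct (Nat.eq_dec t (S k)) as [->|Hne]; [apply Rmin_r|].
    eapply Rle_trans; [apply Rmin_l|]. apply IH. lia.
Qed.

Lemma min_upto_glb k g c : (forall t, (t <= k)%nat -> c <= g t) -> c <= min_upto k g.
Proof.
  induction k as [|k IH]; intros Hc; simpl; [apply Hc; lia|].
  apply Rmin_glb; [apply IH; intros; apply Hc|apply Hc]; lia.
Qed.

Lemma min_upto_telescope (Fs g : nat -> R) c k : 0 <= c ->
  (forall t, (t <= k)%nat -> c * g t <= Fs t - Fs (S t)) ->
  (INR k + 1) * c * min_upto k g <= Fs O - Fs (S k).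
Proof.
  intros Hc. induction k as [|k IH]; intros Hstep.
  - specialize (Hstep O (le_n _)). simpl. lra.
  - specialize (IH (fun t Ht => Hstep t ltac:(lia))). specialize (Hstep (S k) (le_n _)).
    rewrite S_INR. simpl min_upto. set (mk := min_upto k g) in *.
    pose proof (Rmult_le_compat_l c _ _ Hc (Rmin_l mk (g (S k)))).
    pose proof (Rmult_le_compat_l c _ _ Hc (Rmin_r mk (g (S k)))).
    pose proof (pos_INR k). nra.
Qed.

Lemma min_upto_rate (Fs g : nat -> R) Fstar c K k : 0 < c -> 0 < K ->
  (forall t, (t <= k)%nat -> exists p, g t <= K * p /\ c * p <= Fs t - Fs (S t)) ->
  Fstar <= Fs (S k) ->
  min_upto k g <= (Fs O - Fstar) / (c * (INR k + 1)) * K.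
Proof.
  intros Hc HK Hstep Hlow.
  assert (Hk : 0 < INR k + 1) by (pose proof (pos_INR k); lra).
  assert (Htel : (INR k + 1) * (c / K) * min_upto k g <= Fs O - Fs (S k)).
  { apply min_upto_telescope; [left; apply Rdiv_lt_0_compat; assumption|].
    intros t Ht. destruct (Hstep t Ht) as [p [Hg Hp]].
    apply Rmult_le_compat_l with (r := c / K) in Hg; [|left; apply Rdiv_lt_0_compat; assumption].
    replace (c / K * (K * p)) with (c * p) in Hg by (field; lra). lra. }
  assert (HcK : 0 < c / K) by (apply Rdiv_lt_0_compat; assumption).
  apply Rmult_le_reg_l with ((INR k + 1) * (c / K)); [apply Rmult_lt_0_compat; lra|].
  replace ((INR k + 1) * (c / K) * ((Fs O - Fstar) / (c * (INR k + 1)) * K)) with (Fs O - Fstar)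
    by (field; lra).
  lra.
Qed.

Section Algorithm1.
Context {n : nat} {f : V n -> R} {gf : V n -> V n} {L : R} {dom : V n -> Prop} {psi : V n -> R}
  {Fstar eta : R}.
Hypotheses (Hgrad : has_gradient f gf) (HL : 0 < L) (Hlip : lipschitz_grad gf L)
  (Hconv : ext_convex dom psi) (Hlow : forall x, dom x -> Fstar <= Fval f psi x)
  (Heta : 0 <= eta < 1).
Context {beta gamma sigma M : R} {x : nat -> V n} {H : nat -> Mat n} {d : nat -> V n}
  {alpha : nat -> R}.
Hypotheses (Hbeta : 0 < beta < 1) (Hgamma : 0 < gamma < 1) (Hsigma : 0 < sigma)
  (HsM : sigma <= M) (Hrun : alg1_run f gf dom psi eta beta gamma sigma M x H d alpha).

Lemma alg1_dom t : dom (x t).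
Proof.
  destruct Hrun as [Dx0 Hstep]. induction t as [|t IH]; [exact Dx0|].
  destruct (Hstep t) as (_ & _ & _ & (i & -> & [Dstep _] & _) & ->). exact Dstep.
Qed.

Lemma alg1_step_lower t :
  Rmin 1 (beta * (2 * (1 - gamma) * sigma / (L * (1 + sqrt eta)))) <= alpha t.
Proof.
  destruct (proj2 Hrun t) as (_ & Hbnd & [Dd [q [Hq Hd]]] & (i & -> & _ & Hfail) & _).
  destruct i as [|j]; [apply Rmin_l|].
  eapply Rle_trans; [apply Rmin_r|]. simpl.
  apply Rmult_le_compat_l; [lra|].
  destruct (Rle_lt_dec (beta ^ j) (2 * (1 - gamma) * sigma / (L * (1 + sqrt eta))))
    as [Hsmall|Hbig]; [exfalso|lra].
  apply (Hfail j (Nat.lt_succ_diag_r j)).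
  assert (Hgamma' : 0 <= gamma <= 1) by lra.
  apply (armijo_ok_of_small_step Hgrad Hlip HL Hconv (alg1_dom t) Dd Heta Hq Hd
           (proj1 (Hbnd (d t))) Hgamma'); [|exact Hsmall].
  split; [apply pow_lt; lra|].
  rewrite <- (pow1 j). apply pow_incr. lra.
Qed.

Lemma alg1_min_step_pos k : 0 < min_upto k alpha.
Proof.
  eapply Rlt_le_trans; [|apply min_upto_glb; intros t _; apply alg1_step_lower].
  destruct (sqrt_bounds_lt_1 eta Heta) as [Hs0 _].
  apply Rmin_glb_lt; [lra|].
  apply Rmult_lt_0_compat; [lra|]. apply Rdiv_lt_0_compat; nra.
Qed.

Lemma alg1_sufficient_decrease t : exists q, is_Qinf dom gf psi (x t) (H t) q /\
  alpha t * gamma * ((1 - eta) * - q) <= Fval f psi (x t) - Fval f psi (x (S t)).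
Proof.
  destruct (proj2 Hrun t) as (_ & Hbnd & [_ [q [Hq Hd]]] & (i & Hi & [_ Harm] & _) & ->).
  exists q. split; [exact Hq|].
  assert (HDelta : Defs.Delta gf psi (x t) (d t) <= (1 - eta) * q).
  { rewrite Qval_Delta in Hd. pose proof (proj1 (Hbnd (d t))).
    pose proof (dot_nonneg (d t)). nra. }
  assert (Hal : 0 < alpha t) by (rewrite Hi; apply pow_lt; lra).
  rewrite <- Hi in Harm.
  pose proof (Rmult_le_compat_l (alpha t * gamma) _ _ ltac:(nra) HDelta). lra.
Qed.

Lemma alg1_rate {G : nat -> V n} :
  (forall t, is_argmin_QI dom gf psi (x t) (G t)) ->
  forall k : nat,
    min_upto k (fun t => vnorm (G t) ^ 2)
      <= (Fval f psi (x O) - Fstar) / (gamma * (INR k + 1))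
         * (cst M sigma / (2 * (1 - eta) * sigma * min_upto k alpha)).
Proof.
  intros HG k. pose proof (alg1_min_step_pos k) as HA. set (A := min_upto k alpha) in *.
  assert (HK : 0 < cst M sigma / (2 * sigma)) by
    (pose proof (Rmax_le_cst M sigma ltac:(lra)); pose proof (Rmax_l 1 M); lra).
  replace ((Fval f psi (x O) - Fstar) / (gamma * (INR k + 1))
             * (cst M sigma / (2 * (1 - eta) * sigma * A)))
    with ((Fval f psi (x O) - Fstar) / (gamma * (1 - eta) * A * (INR k + 1))
             * (cst M sigma / (2 * sigma)))
    by (pose proof (pos_INR k); field; repeat split; lra).
  apply (min_upto_rate (fun t => Fval f psi (x t)));
    [apply Rmult_lt_0_compat; [nra|exact HA]|exact HK| |apply Hlow, alg1_dom].
  intros t Ht. destruct (alg1_sufficient_decrease t) as [q [Hq Hdec]].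
  destruct (proj2 Hrun t) as (_ & Hbnd & _).
  pose proof (Qinf_nonpos (x t) (H t) q (alg1_dom t) Hq) as Hq0.
  exists (- q). split.
  - rewrite vnorm_pow2.
    eapply Rle_trans; [apply (argmin_QI_bound Hconv (x t) (H t) (G t) q M (alg1_dom t) (HG t) Hq);
                       apply (proj2 (Hbnd (G t)))|].
    apply Rmult_le_compat_r; [lra|apply Rmax_le_cst; lra].
  - assert (HAt : A <= alpha t) by apply min_upto_le, Ht.
    assert (Hc : 0 <= gamma * ((1 - eta) * - q)) by (apply Rmult_le_pos; [|apply Rmult_le_pos]; lra).
    pose proof (Rmult_le_compat_r _ _ _ Hc HAt). lra.
Qed.

Lemma alg1_rate_step_free k : 0 <= Fval f psi (x O) - Fstar ->
  (Fval f psi (x O) - Fstar) / (gamma * (INR k + 1))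
      * (cst M sigma / (2 * (1 - eta) * sigma * min_upto k alpha))
    <= (Fval f psi (x O) - Fstar) / (gamma * (INR k + 1))
       * (cst M sigma / (2 * sigma))
       * Rmax (/ (1 - eta)) (L / (2 * (1 - sqrt eta) * (1 - gamma) * sigma * beta)).
Proof.
  intros HF. pose proof (alg1_min_step_pos k) as HA. set (A := min_upto k alpha) in *.
  destruct (sqrt_bounds_lt_1 eta Heta) as [Hs0 [Hs1 Hss]]. set (s := sqrt eta) in *.
  assert (HK : 0 <= cst M sigma / (2 * sigma)) by
    (pose proof (Rmax_le_cst M sigma ltac:(lra)); pose proof (Rmax_l 1 M); lra).
  assert (Hpre : 0 <= (Fval f psi (x O) - Fstar) / (gamma * (INR k + 1))).
  { apply Rmult_le_pos; [exact HF|]. left. apply Rinv_0_lt_compat.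
    pose proof (pos_INR k). nra. }
  replace (cst M sigma / (2 * (1 - eta) * sigma * A))
    with (cst M sigma / (2 * sigma) * / ((1 - eta) * A)) by (field; repeat split; lra).
  rewrite Rmult_assoc. apply Rmult_le_compat_l; [exact Hpre|].
  apply Rmult_le_compat_l; [exact HK|].
  assert (Hlower : Rmin 1 (beta * (2 * (1 - gamma) * sigma / (L * (1 + s)))) <= A)
    by (apply min_upto_glb; intros t _; apply alg1_step_lower).
  unfold Rmin in Hlower. destruct (Rle_dec 1 _) as [_|Hsmall].
  - eapply Rle_trans; [|apply Rmax_l].
    apply Rinv_le_contravar; [nra|]. nra.
  - eapply Rle_trans; [|apply Rmax_r].
    replace (L / (2 * (1 - s) * (1 - gamma) * sigma * beta))
      with (/ ((1 - eta) * (beta * (2 * (1 - gamma) * sigma / (L * (1 + s))))))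
      by (rewrite <- Hss; field; repeat split; nra).
    apply Rinv_le_contravar; [|apply Rmult_le_compat_l; lra].
    apply Rmult_lt_0_compat; [lra|].
    apply Rmult_lt_0_compat; [lra|]. apply Rdiv_lt_0_compat; nra.
Qed.

End Algorithm1.

Lemma Mtilde1_ge L beta gamma m0 M0 eta : 0 <= M0 -> M0 <= Mtilde1 L beta gamma m0 M0 eta.
Proof.
  intros HM0. unfold Mtilde1.
  pose proof (Rmax_l 1 (L * (1 + sqrt eta) / (beta * (2 - gamma * (1 - sqrt eta)) * m0))). nra.
Qed.

Lemma Mtilde2_ge L beta gamma m0 M0 eta : M0 <= Mtilde2 L beta gamma m0 M0 eta.
Proof.
  unfold Mtilde2.
  pose proof (Rmax_l 1 (/ beta * (L * (1 + sqrt eta) / (2 - gamma * (1 - sqrt eta)) - m0))). lra.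
Qed.

Section Algorithm2.
Context {n : nat} {f : V n -> R} {gf : V n -> V n} {L : R} {dom : V n -> Prop} {psi : V n -> R}
  {Fstar eta : R}.
Hypotheses (Hgrad : has_gradient f gf) (HL : 0 < L) (Hlip : lipschitz_grad gf L)
  (Hconv : ext_convex dom psi) (Hlow : forall x, dom x -> Fstar <= Fval f psi x)
  (Heta : 0 <= eta < 1).
Context {beta gamma m0 M0 : R} {x : nat -> V n} {H0 : nat -> Mat n} {jk : nat -> nat}
  {D : nat -> nat -> V n}.
Hypotheses (Hbeta : 0 < beta < 1) (Hgamma : 0 < gamma <= 1) (Hm0 : 0 < m0).

Section Trials.
Context {Htr : R -> Mat n -> nat -> Mat n}.
Hypothesis Hrun : alg2_run Htr f gf dom psi eta beta gamma m0 M0 x H0 jk D.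

Lemma alg2_dom t : dom (x t).
Proof.
  destruct Hrun as [Dx0 Hstep]. induction t as [|t IH]; [exact Dx0|].
  destruct (Hstep t) as (_ & _ & Hinex & _ & _ & ->). exact (proj1 (Hinex _ (le_n _))).
Qed.

Lemma alg2_rejected_curvature t i m : (i < jk t)%nat ->
  (forall v, m * dot v v <= quad (Htr beta (H0 t) i) v) ->
  m < L * (1 + sqrt eta) / (2 - gamma * (1 - sqrt eta)).
Proof.
  intros Hi Hm. destruct (proj2 Hrun t) as (_ & _ & Hinex & Hrej & _).
  destruct (Hinex i (Nat.lt_le_incl _ _ Hi)) as [Dd [q [Hq Hd]]].
  apply Rnot_le_lt. intros Hlarge. apply (Hrej i Hi).
  assert (Hgamma' : 0 <= gamma <= 1) by lra.
  exact (accept2_of_large_curvature Hgrad Hlip HL Hconv (alg2_dom t) Dd Heta Hq Hd (Hm _) Hgamma'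
           Hlarge).
Qed.

Lemma alg2_sufficient_decrease t : exists q, is_Qinf dom gf psi (x t) (Htr beta (H0 t) (jk t)) q /\
  gamma * ((1 - eta) * - q) <= Fval f psi (x t) - Fval f psi (x (S t)).
Proof.
  destruct (proj2 Hrun t) as (_ & _ & Hinex & _ & [Hacc _] & ->).
  destruct (Hinex (jk t) (le_n _)) as [_ [q [Hq Hd]]].
  exists q. split; [exact Hq|].
  pose proof (Rmult_le_compat_l gamma _ _ ltac:(lra) Hd). lra.
Qed.

Lemma alg2_rate {Mt : R} {G : nat -> V n} : m0 <= Mt ->
  (forall t v, quad (Htr beta (H0 t) (jk t)) v <= Mt * dot v v) ->
  (forall t, is_argmin_QI dom gf psi (x t) (G t)) ->
  forall k : nat,
    min_upto k (fun t => vnorm (G t) ^ 2)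
      <= (Fval f psi (x O) - Fstar) / (gamma * (INR k + 1))
         * (cst Mt m0 / (2 * (1 - eta) * m0)).
Proof.
  intros HmM Hacc HG k.
  assert (HK : 0 < cst Mt m0 / (2 * m0)) by
    (pose proof (Rmax_le_cst Mt m0 ltac:(lra)); pose proof (Rmax_l 1 Mt); lra).
  replace ((Fval f psi (x O) - Fstar) / (gamma * (INR k + 1)) * (cst Mt m0 / (2 * (1 - eta) * m0)))
    with ((Fval f psi (x O) - Fstar) / (gamma * (1 - eta) * (INR k + 1)) * (cst Mt m0 / (2 * m0)))
    by (pose proof (pos_INR k); field; repeat split; lra).
  apply (min_upto_rate (fun t => Fval f psi (x t)));
    [apply Rmult_lt_0_compat; lra|exact HK| |apply Hlow, alg2_dom].
  intros t _. destruct (alg2_sufficient_decrease t) as [q [Hq Hdec]].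
  pose proof (Qinf_nonpos (x t) _ q (alg2_dom t) Hq) as Hq0.
  exists (- q). split; [|lra].
  rewrite vnorm_pow2.
  eapply Rle_trans;
    [apply (argmin_QI_bound Hconv (x t) _ (G t) q Mt (alg2_dom t) (HG t) Hq (Hacc t _))|].
  apply Rmult_le_compat_r; [lra|apply Rmax_le_cst; lra].
Qed.

End Trials.

Lemma alg2_variant1_accepted_bound :
  alg2_run Htrial1 f gf dom psi eta beta gamma m0 M0 x H0 jk D ->
  forall t v, quad (Htrial1 beta (H0 t) (jk t)) v <= Mtilde1 L beta gamma m0 M0 eta * dot v v.
Proof.
  intros Hrun t v.
  destruct (proj2 Hrun t) as (_ & Hbnd & _).
  destruct (sqrt_bounds_lt_1 eta Heta) as [Hs0 [Hs1 _]].
  set (th := L * (1 + sqrt eta) / (2 - gamma * (1 - sqrt eta))).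
  assert (Hfac : Mtilde1 L beta gamma m0 M0 eta = M0 * Rmax 1 (th / (beta * m0)))
    by (unfold Mtilde1, th; f_equal; f_equal; field; repeat split; nra).
  rewrite Hfac. unfold Htrial1. rewrite quad_mscale.
  pose proof (dot_nonneg v). pose proof (Hbnd v) as [Hlo Hhi].
  assert (HM0 : 0 <= M0 * dot v v) by nra.
  destruct (jk t) as [|i] eqn:Ej.
  - simpl. rewrite Rinv_1. pose proof (Rmax_l 1 (th / (beta * m0))). nra.
  - assert (Hbi : 0 < beta ^ i) by (apply pow_lt; lra).
    assert (Hrej : m0 * / beta ^ i < th).
    { apply (alg2_rejected_curvature Hrun t i); [rewrite Ej; lia|].
      intros w. unfold Htrial1. rewrite quad_mscale.
      pose proof (proj1 (Hbnd w)). pose proof (Rinv_0_lt_compat _ Hbi). nra. }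
    assert (Hstep : / beta ^ S i <= th / (beta * m0)).
    { simpl. rewrite Rinv_mult.
      apply Rmult_le_reg_r with (beta * m0); [nra|].
      replace (/ beta * / beta ^ i * (beta * m0)) with (m0 * / beta ^ i) by (field; lra).
      replace (th / (beta * m0) * (beta * m0)) with th by (field; lra). lra. }
    pose proof (Rmax_r 1 (th / (beta * m0))).
    assert (0 <= / beta ^ S i) by (left; apply Rinv_0_lt_compat, pow_lt; lra).
    nra.
Qed.

Lemma alg2_variant2_accepted_bound :
  alg2_run Htrial2 f gf dom psi eta beta gamma m0 M0 x H0 jk D ->
  forall t v, quad (Htrial2 beta (H0 t) (jk t)) v <= Mtilde2 L beta gamma m0 M0 eta * dot v v.
Proof.
  intros Hrun t v.
  destruct (proj2 Hrun t) as (_ & Hbnd & _).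
  set (th := L * (1 + sqrt eta) / (2 - gamma * (1 - sqrt eta))).
  unfold Mtilde2. fold th. set (R2 := / beta * (th - m0)).
  pose proof (dot_nonneg v). pose proof (Hbnd v) as [Hlo Hhi].
  pose proof (Rmax_l 1 R2). pose proof (Rmax_r 1 R2).
  assert (Hquad_S : forall i w,
            quad (Htrial2 beta (H0 t) (S i)) w = quad (H0 t) w + / beta ^ i * dot w w)
    by (intros; simpl; rewrite quad_madd, quad_mscale, quad_Iden; reflexivity).
  destruct (jk t) as [|[|i]] eqn:Ej.
  - simpl. nra.
  - rewrite Hquad_S. simpl. rewrite Rinv_1. nra.
  - rewrite Hquad_S.
    assert (Hbi : 0 < beta ^ i) by (apply pow_lt; lra).
    assert (Hrej : m0 + / beta ^ i < th).
    { apply (alg2_rejected_curvature Hrun t (S i)); [rewrite Ej; lia|].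
      intros w. rewrite Hquad_S. pose proof (proj1 (Hbnd w)). lra. }
    assert (Hstep : / beta ^ S i <= R2).
    { simpl. rewrite Rinv_mult. unfold R2.
      apply Rmult_le_compat_l; [left; apply Rinv_0_lt_compat; lra|lra]. }
    assert (0 <= / beta ^ S i) by (left; apply Rinv_0_lt_compat, pow_lt; lra).
    nra.
Qed.

End Algorithm2.

Theorem corollary3 (n : nat) (f : V n -> R) (gf : V n -> V n) (L : R)
  (dom : V n -> Prop) (psi : V n -> R) (Fstar eta : R) :
  assumption1 f gf L dom psi Fstar ->
  0 <= eta < 1 ->
  (* Algorithm 1 *)
  (forall (beta gamma sigma M : R) (x : nat -> V n) (H : nat -> Mat n)
          (d : nat -> V n) (alpha : nat -> R) (G : nat -> V n),
      0 < beta < 1 -> 0 < gamma < 1 -> 0 < sigma -> sigma <= M ->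
      alg1_run f gf dom psi eta beta gamma sigma M x H d alpha ->
      (forall t, is_argmin_QI dom gf psi (x t) (G t)) ->
      forall k : nat,
        min_upto k (fun t => vnorm (G t) ^ 2)
          <= (Fval f psi (x O) - Fstar) / (gamma * (INR k + 1))
             * (cst M sigma / (2 * (1 - eta) * sigma * min_upto k alpha))
        /\
        (Fval f psi (x O) - Fstar) / (gamma * (INR k + 1))
             * (cst M sigma / (2 * (1 - eta) * sigma * min_upto k alpha))
          <= (Fval f psi (x O) - Fstar) / (gamma * (INR k + 1))
             * (cst M sigma / (2 * sigma))
             * Rmax (/ (1 - eta)) (L / (2 * (1 - sqrt eta) * (1 - gamma) * sigma * beta)))
  /\
  (* Algorithm 2, Variant 1 *)
  (forall (beta gamma m0 M0 : R) (x : nat -> V n) (H0 : nat -> Mat n)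
          (jk : nat -> nat) (D : nat -> nat -> V n) (G : nat -> V n),
      0 < beta < 1 -> 0 < gamma <= 1 -> 0 < m0 -> m0 <= M0 ->
      alg2_run Htrial1 f gf dom psi eta beta gamma m0 M0 x H0 jk D ->
      (forall t, is_argmin_QI dom gf psi (x t) (G t)) ->
      forall k : nat,
        min_upto k (fun t => vnorm (G t) ^ 2)
          <= (Fval f psi (x O) - Fstar) / (gamma * (INR k + 1))
             * (cst (Mtilde1 L beta gamma m0 M0 eta) m0 / (2 * (1 - eta) * m0)))
  /\
  (* Algorithm 2, Variant 2 *)
  (forall (beta gamma m0 M0 : R) (x : nat -> V n) (H0 : nat -> Mat n)
          (jk : nat -> nat) (D : nat -> nat -> V n) (G : nat -> V n),
      0 < beta < 1 -> 0 < gamma <= 1 -> 0 < m0 -> m0 <= M0 ->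
      alg2_run Htrial2 f gf dom psi eta beta gamma m0 M0 x H0 jk D ->
      (forall t, is_argmin_QI dom gf psi (x t) (G t)) ->
      forall k : nat,
        min_upto k (fun t => vnorm (G t) ^ 2)
          <= (Fval f psi (x O) - Fstar) / (gamma * (INR k + 1))
             * (cst (Mtilde2 L beta gamma m0 M0 eta) m0 / (2 * (1 - eta) * m0))).
Proof.
  intros (Hgrad & HL & Hlip & _ & Hconv & _ & Hlow & _) Heta. split; [|split].
  - intros beta gamma sigma M x H d alpha G Hbeta Hgamma Hsigma HsM Hrun HG k. split.
    + exact (alg1_rate Hgrad HL Hlip Hconv Hlow Heta Hbeta Hgamma Hsigma HsM Hrun HG k).
    + apply (alg1_rate_step_free Hgrad HL Hlip Hconv Heta Hbeta Hgamma Hsigma HsM Hrun).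
      pose proof (Hlow _ (alg1_dom Hrun O)). lra.
  - intros beta gamma m0 M0 x H0 jk D G Hbeta Hgamma Hm0 HmM Hrun HG k.
    pose proof (Mtilde1_ge L beta gamma m0 M0 eta ltac:(lra)).
    apply (alg2_rate Hconv Hlow Heta Hbeta Hgamma Hm0 Hrun); [lra| |exact HG].
    exact (alg2_variant1_accepted_bound Hgrad HL Hlip Hconv Heta Hbeta Hgamma Hm0 Hrun).
  - intros beta gamma m0 M0 x H0 jk D G Hbeta Hgamma Hm0 HmM Hrun HG k.
    pose proof (Mtilde2_ge L beta gamma m0 M0 eta).
    apply (alg2_rate Hconv Hlow Heta Hbeta Hgamma Hm0 Hrun); [lra| |exact HG].
    exact (alg2_variant2_accepted_bound Hgrad HL Hlip Hconv Heta Hbeta Hgamma Hrun).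
Qed.
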